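(* Let $\mathcal{H}$ be a complex Hilbert space, $A\in\mathcal{B}(\mathcal{H})$ positive and $S\in\mathcal{B}_A(\mathcal{H})$. For $a,b,c\in\mathcal{H}$ define $$\delta(a,b,c)=\begin{cases}\dfrac{\|b\|_A}{\|a\|_A}\left(|\langle a,c\rangle_A|\inf_{\lambda\in\mathbb{C}}\|c-\lambda b\|_A-\dfrac12\inf_{\mu\in\mathbb{C}}\|a-\mu b\|_A\right)^2 & \text{if } \|a\|_A\|b\|_A\neq 0,\\[2mm] 0 & \text{if } \|a\|_A\|b\|_A=0.\end{cases}$$ Then $$d\omega_A^2(S)\le \omega_A^2\left(S^{\sharp_A}S+S\right)+\omega_A\left(S^{\sharp_A}S^2\right)+\frac12\left\|\left(S^{\sharp_A}S\right)^2+S^{\sharp_A}S\right\|_A-2\inf_{\|z\|_A=1}\delta\left(S^{\sharp_A}Sz,\,Sz,\,z\right).$$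
   Context: $\mathcal{B}(\mathcal{H})$ denotes the bounded linear operators on $\mathcal{H}$. For positive $A$, $\langle x,z\rangle_A=\langle Ax,z\rangle$ and $\|z\|_A=\|A^{1/2}z\|$. $\mathcal{B}_A(\mathcal{H})$ is the set of $S\in\mathcal{B}(\mathcal{H})$ for which some $R\in\mathcal{B}(\mathcal{H})$ satisfies $AR=S^*A$; for such $S$, $S^{\sharp_A}=A^{\dagger}S^*A$ with $A^\dagger$ the Moore–Penrose inverse of $A$. For operators $T$ bounded with respect to $\|\cdot\|_A$: $\|T\|_A=\sup_{\|z\|_A=1}\|Tz\|_A$, $\omega_A(T)=\sup_{\|z\|_A=1}|\langle Tz,z\rangle_A|$, and $d\omega_A(T)=\sup_{\|z\|_A=1}(|\langle Tz,z\rangle_A|^2+\|Tz\|_A^4)^{1/2}$. *)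

From HB Require Import structures.
From mathcomp Require Import all_boot all_order all_algebra.
From mathcomp Require Import complex.
From mathcomp Require Import all_classical all_reals.
Set Implicit Arguments. Unset Strict Implicit. Unset Printing Implicit Defensive.
Import Order.TTheory GRing.Theory Num.Theory.
Local Open Scope ring_scope.
Local Open Scope classical_set_scope.

Section ASemiHilbert.
Variables (R : realType) (H : lmodType R[i]).
Implicit Types (ip : H -> H -> R[i]) (T A : H -> H).

Definition cabs (x : R[i]) : R :=
  Num.sqrt (complex.Re x ^+ 2 + complex.Im x ^+ 2).

Definition is_inner_product ip : Prop :=
  [/\ forall (a : R[i]) (x y z : H), ip (a *: x + y) z = a * ip x z + ip y z,
      forall x y : H, ip y x = (ip x y)^*,
      forall x : H, 0 <= ip x x
    & forall x : H, ip x x = 0 -> x = 0].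

Definition hnorm ip (x : H) : R := Num.sqrt (complex.Re (ip x x)).

Definition hcomplete ip : Prop :=
  forall u : nat -> H,
    (forall e : R, 0 < e -> exists N : nat, forall m n : nat,
        (N <= m)%N -> (N <= n)%N -> hnorm ip (u m - u n) < e) ->
    exists l : H, forall e : R, 0 < e -> exists N : nat, forall n : nat,
        (N <= n)%N -> hnorm ip (u n - l) < e.

Definition is_hilbert ip : Prop := is_inner_product ip /\ hcomplete ip.

Definition bounded_op ip T : Prop :=
  (forall (a : R[i]) (x y : H), T (a *: x + y) = a *: T x + T y) /\
  exists M : R, forall x : H, hnorm ip (T x) <= M * hnorm ip x.

Definition is_adjoint ip T Ts : Prop := forall x y : H, ip (T x) y = ip x (Ts y).

Definition positive_op ip A : Prop := forall x : H, 0 <= ip (A x) x.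

(* x = A^dagger y for y in the range of A: the Moore-Penrose inverse of A,
   restricted to R(A), maps y to the unique x in N(A)^perp with A x = y. *)
Definition mp_inverse_on_range ip A (y x : H) : Prop :=
  A x = y /\ forall w : H, A w = 0 -> ip x w = 0.

(* S in B_A(H), given its adjoint Ss = S^* : exists R in B(H) with A R = S^* A *)
Definition in_BA ip A (Ss : H -> H) : Prop :=
  exists Rop : H -> H, bounded_op ip Rop /\ forall x : H, A (Rop x) = Ss (A x).

(* Ssh = S^{#_A} = A^dagger S^* A (S^* A takes values in R(A) when S in B_A(H)) *)
Definition is_A_adjoint ip A (Ss Ssh : H -> H) : Prop :=
  forall z : H, mp_inverse_on_range ip A (Ss (A z)) (Ssh z).

Definition ipA ip A (x z : H) : R[i] := ip (A x) z.
Definition normA ip A (z : H) : R := Num.sqrt (complex.Re (ip (A z) z)).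

Definition unitA ip A : set H := [set z | normA ip A z = 1].

Definition opnormA ip A T : R :=
  sup [set normA ip A (T z) | z in unitA ip A].
Definition omegaA ip A T : R :=
  sup [set cabs (ipA ip A (T z) z) | z in unitA ip A].
Definition domegaA ip A T : R :=
  sup [set Num.sqrt (cabs (ipA ip A (T z) z) ^+ 2 + normA ip A (T z) ^+ 4)
      | z in unitA ip A].

Definition deltaA ip A (a b c : H) : R :=
  if normA ip A a * normA ip A b != 0 then
    normA ip A b / normA ip A a *
    (cabs (ipA ip A a c) * inf [set normA ip A (c - l *: b) | l in [set: R[i]]]
     - 2^-1 * inf [set normA ip A (a - m *: b) | m in [set: R[i]]]) ^+ 2
  else 0.

End ASemiHilbert.

From HB Require Import structures.
From mathcomp Require Import all_boot all_order all_algebra.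
From mathcomp Require Import complex.
From mathcomp Require Import all_classical all_reals.
From mathcomp Require Import ring lra.
Import Order.TTheory GRing.Theory Num.Theory.
Local Open Scope complex_scope.
Local Open Scope ring_scope.
Local Open Scope classical_set_scope.
Set Implicit Arguments. Unset Strict Implicit. Unset Printing Implicit Defensive.

(* For a unit vector [z] put [x := S z] and [y := S^#A x], so that
   [<y, z>_A = |x|_A^2], [<(S^#A S + S) z, z>_A = |x|_A^2 + <x, z>_A],
   [<S^#A S^2 z, z>_A = <x, y>_A] and
   [<((S^#A S)^2 + S^#A S) z, z>_A = |y|_A^2 + |x|_A^2].  The pointwise form
   of the inequality then reduces to a refinement of Buzano's inequality for
   the semi-inner product [<., .>_A]:
     [2 |<x, z>_A| |<y, z>_A| + 2 delta(y, x, z) <= |<x, y>_A| + |x|_A |y|_A],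
   proved by reflecting [y] across the line of [z] and comparing the
   components orthogonal to [x] of [y], of its reflection and of [z].
   Passing to suprema needs [S] and [S^#A] to be bounded for [|.|_A]: if
   [A R = S^* A] then [R S] is A-symmetric, so [k |-> |(R S)^k v|_A] is
   log-convex, and its at most geometric growth (as [R S] is bounded) forces
   [|R S v|_A <= |R S| |v|_A], whence [|S v|_A^2 = <v, R S v>_A] is bounded. *)

Section ComplexModulus.
Variable R : realType.
Implicit Types (c d : R[i]) (r : R).

Lemma ReD c d : complex.Re (c + d) = complex.Re c + complex.Re d.
Proof. by case: c; case: d. Qed.

Lemma cabsE c : (cabs c)%:C = `|c|.
Proof. by rewrite normc_def. Qed.

Lemma cabs_ge0 c : 0 <= cabs c.
Proof. exact: sqrtr_ge0. Qed.

Lemma cabsM c d : cabs (c * d) = cabs c * cabs d.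
Proof. by apply: complexI; rewrite rmorphM /= !cabsE normrM. Qed.

Lemma ler_cabsD c d : cabs (c + d) <= cabs c + cabs d.
Proof. by rewrite -lecR rmorphD /= !cabsE ler_normD. Qed.

Lemma cabs_real r : cabs r%:C = `|r|.
Proof. by rewrite /cabs /= expr0n addr0 sqrtr_sqr. Qed.

Lemma cabs_natr n : cabs (n%:R : R[i]) = n%:R.
Proof. by rewrite -(rmorph_nat (real_complex R)) cabs_real ger0_norm. Qed.

Lemma cabsJ c : cabs c^* = cabs c.
Proof. by case: c => a b; rewrite /cabs /= sqrrN. Qed.

Lemma cabs0 : cabs (0 : R[i]) = 0.
Proof. by rewrite (cabs_real 0) normr0. Qed.

Lemma sqr_cabs c : cabs c ^+ 2 = complex.Re c ^+ 2 + complex.Im c ^+ 2.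
Proof. by rewrite sqr_sqrtr // addr_ge0 // sqr_ge0. Qed.

Lemma sqr_cabs_realD r c :
  cabs (r%:C + c) ^+ 2 = cabs c ^+ 2 + r * (r + 2 * complex.Re c).
Proof. by rewrite !sqr_cabs; case: c => a b /=; rewrite add0r; ring. Qed.

Lemma mulcJ_cabs c : c * c^* = (cabs c ^+ 2)%:C.
Proof. by rewrite rmorphXn /= cabsE normCK. Qed.

Lemma ler_normRe_cabs c : `|complex.Re c| <= cabs c.
Proof.
rewrite -ler_sqr ?nnegrE ?cabs_ge0 // real_normK ?num_real //.
by rewrite sqr_cabs lerDl sqr_ge0.
Qed.

Lemma ler_Re_cabs c : complex.Re c <= cabs c.
Proof. exact: le_trans (ler_norm _) (ler_normRe_cabs c). Qed.

Lemma ge0_complex_real c : 0 <= c -> c = (complex.Re c)%:C /\ 0 <= complex.Re c.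
Proof. by case: c => a b; rewrite lecE /= => /andP[/eqP -> ->]. Qed.

End ComplexModulus.

Section SemiInnerProduct.
Variables (R : realType) (H : lmodType R[i]) (f : H -> H -> R[i]).
Hypothesis sipL : forall a x y z, f (a *: x + y) z = a * f x z + f y z.
Hypothesis sipC : forall x y, f y x = (f x y)^*.
Hypothesis sipP : forall x, 0 <= f x x.
Local Notation nf := (hnorm f).

Lemma sipDl x y z : f (x + y) z = f x z + f y z.
Proof. by have := sipL 1 x y z; rewrite scale1r mul1r. Qed.

Lemma sip0l z : f 0 z = 0.
Proof. by apply: (addrI (f 0 z)); rewrite -sipDl !addr0. Qed.

Lemma sipZl a x z : f (a *: x) z = a * f x z.
Proof. by have := sipL a x 0 z; rewrite !addr0 sip0l addr0. Qed.

Lemma sipNl x z : f (- x) z = - f x z.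
Proof. by rewrite -scaleN1r sipZl mulN1r. Qed.

Lemma sipBl x y z : f (x - y) z = f x z - f y z.
Proof. by rewrite sipDl sipNl. Qed.

Lemma sipDr z x y : f z (x + y) = f z x + f z y.
Proof. by rewrite [LHS]sipC sipDl rmorphD /= -!sipC. Qed.

Lemma sipZr z a x : f z (a *: x) = a^* * f z x.
Proof. by rewrite [LHS]sipC sipZl rmorphM /= -sipC. Qed.

Lemma sipNr z x : f z (- x) = - f z x.
Proof. by rewrite -scaleN1r sipZr rmorphN1 mulN1r. Qed.

Lemma sipBr z x y : f z (x - y) = f z x - f z y.
Proof. by rewrite sipDr sipNr. Qed.

Lemma hnorm_ge0 x : 0 <= nf x.
Proof. exact: sqrtr_ge0. Qed.

Lemma sip_diag x : f x x = (nf x ^+ 2)%:C.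
Proof.
by have [fxx Re_ge0] := ge0_complex_real (sipP x); rewrite sqr_sqrtr.
Qed.

Lemma Re_sip_diag x : complex.Re (f x x) = nf x ^+ 2.
Proof. by rewrite sip_diag. Qed.

Lemma hnormZ a x : nf (a *: x) = cabs a * nf x.
Proof.
rewrite [LHS]/hnorm sipZl sipZr mulrA mulcJ_cabs sip_diag -rmorphM /=.
by rewrite -exprMn sqrtr_sqr ger0_norm // mulr_ge0 ?cabs_ge0 ?hnorm_ge0.
Qed.

Lemma hnormD_sqr x y :
  nf (x + y) ^+ 2 = nf x ^+ 2 + nf y ^+ 2 + 2 * complex.Re (f x y).
Proof.
rewrite -!Re_sip_diag sipDl !sipDr [f y x]sipC !ReD.
by case: (f x y) => a b /=; ring.
Qed.

(* If [f x y != 0] then [f (x - t y) (x - t y) = -1] for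
   [t := (f x x + 1) / (2 * conj (f x y))]. *)
Lemma sip_null x y : nf y = 0 -> f x y = 0.
Proof.
move=> y0; apply/eqP/negP => /negP c0.
have cJ0 : (f x y)^* != 0 by rewrite conjC_eq0.
set r := (nf x ^+ 2)%:C.
have rJ : r^* = r by rewrite geC0_conj // lecR sqr_ge0.
pose t := (r + 1) / (2 * (f x y)^*).
have tJ : t^* = (r + 1) / (2 * f x y).
  by rewrite /t fmorph_div /= rmorphD rmorphM /= conjCK rJ rmorph1 rmorph_nat.
have := sipP (x - t *: y).
suff -> : f (x - t *: y) (x - t *: y) = -1 by rewrite oppr_ge0 ler10.
rewrite sipBl !sipBr !sipZl !sipZr (sipC x y) (sip_diag y) y0 expr0n.
by rewrite rmorph0 (sip_diag x) -/r tJ /t; field; rewrite c0 cJ0.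
Qed.

Lemma hnormN x : nf (- x) = nf x.
Proof. by rewrite /hnorm sipNl sipNr opprK. Qed.

Lemma sip_diag_neq0 x : nf x != 0 -> f x x != 0.
Proof.
move=> x0; rewrite sip_diag; apply/eqP => /(congr1 (@complex.Re R)) /= /eqP.
by rewrite sqrf_eq0 (negbTE x0).
Qed.

Definition perp x v := v - (f v x / f x x) *: x.

Lemma sip_perp x v : nf x != 0 -> f (perp x v) x = 0.
Proof. by move=> x0; rewrite sipBl sipZl divfK ?subrr ?sip_diag_neq0. Qed.

Lemma perpD x u v : perp x (u + v) = perp x u + perp x v.
Proof. by rewrite /perp sipDl mulrDl scalerDl opprD addrACA. Qed.

Lemma perpZ x k u : perp x (k *: u) = k *: perp x u.
Proof. by rewrite /perp sipZl -mulrA -scalerA scalerBr. Qed.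

Lemma hnorm_perp_le x v l : nf x != 0 -> nf (perp x v) <= nf (v - l *: x).
Proof.
move=> x0; have -> : v - l *: x = perp x v + (f v x / f x x - l) *: x.
  by rewrite /perp scalerBl addrA subrK.
rewrite -ler_sqr ?nnegrE ?hnorm_ge0 // (hnormD_sqr (perp x v)).
by rewrite sipZr sip_perp // !mulr0 addr0 lerDl sqr_ge0.
Qed.

Lemma inf_dist_perp x v : nf x != 0 ->
  inf [set nf (v - l *: x) | l in [set: R[i]]] = nf (perp x v).
Proof.
move=> x0; apply/eqP; rewrite eq_le; apply/andP; split.
- apply: ge_inf; last by exists (f v x / f x x).
  by exists 0 => _ [l _ <-]; exact: hnorm_ge0.
- apply: lb_le_inf; first by exists (nf (v - 0 *: x)), 0.
  by move=> _ [l _ <-]; exact: hnorm_perp_le.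
Qed.

Lemma hnorm_perp_sqr x v : nf x != 0 ->
  nf (perp x v) ^+ 2 * nf x ^+ 2 = nf v ^+ 2 * nf x ^+ 2 - cabs (f v x) ^+ 2.
Proof.
move=> x0.
have e : f (perp x v) (perp x v) * f x x = f v v * f x x - f v x * (f v x)^*.
  rewrite {2}/perp sipBr sipZr sip_perp // mulr0 subr0.
  by rewrite /perp sipBl sipZl (sipC v x); field; rewrite sip_diag_neq0.
move: e; rewrite !sip_diag mulcJ_cabs => /(congr1 (@complex.Re R)) /=.
by rewrite !mulr0 !subr0.
Qed.

Lemma cauchy_schwarz x y : cabs (f x y) <= nf x * nf y.
Proof.
have [y0|y0] := eqVneq (nf y) 0; first by rewrite sip_null // cabs0 y0 mulr0.
rewrite -ler_sqr ?nnegrE ?cabs_ge0 ?mulr_ge0 ?hnorm_ge0 // exprMn.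
by rewrite -subr_ge0 -hnorm_perp_sqr // mulr_ge0 ?sqr_ge0.
Qed.

Lemma hnormD_le x y : nf (x + y) <= nf x + nf y.
Proof.
have := le_trans (ler_Re_cabs (f x y)) (cauchy_schwarz x y).
rewrite -[_ <= nf x + _]ler_sqr ?nnegrE ?addr_ge0 ?hnorm_ge0 // hnormD_sqr; nra.
Qed.

Lemma ler_dist_hnormD x y : `|nf (x + y) - nf x| <= nf y.
Proof.
have := hnormD_le x y; have := hnormD_le (x + y) (- y).
by rewrite addrK hnormN ler_norml => ? ?; apply/andP; split; lra.
Qed.

Lemma hnorm_reflect y e : nf e = 1 -> nf ((2 * f y e) *: e - y) = nf y.
Proof.
move=> e1; have fee : f e e = 1 by rewrite sip_diag e1 expr1n rmorph1.
rewrite /hnorm sipBl !sipBr !sipZl !sipZr fee (sipC y e) rmorphM rmorph_nat.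
by congr (Num.sqrt (complex.Re _)); ring.
Qed.

(* Reflect [y] across the line of [e]: for [w := 2 f y e *: e - y], the sum
   [perp x y + perp x w] is a multiple of [perp x e]. *)
Lemma buzano_perp x y e : nf e = 1 -> nf x != 0 -> nf y != 0 ->
  2 * cabs (f x e) * cabs (f y e)
  + 2 * (nf x / nf y
         * (cabs (f y e) * nf (perp x e) - 2^-1 * nf (perp x y)) ^+ 2)
  <= cabs (f x y) + nf x * nf y.
Proof.
move=> e1 x0 y0.
have X0 : 0 < nf x by rewrite lt_def x0 hnorm_ge0.
have Y0 : 0 < nf y by rewrite lt_def y0 hnorm_ge0.
set c := f y e; pose w := (2 * c) *: e - y.
have w_norm : nf w = nf y := hnorm_reflect y e1.
have w_sum : 2 * cabs (f x e) * cabs c <= cabs (f x w) + cabs (f x y).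
  have -> : f x w = 2 * f x e * c^* - f x y.
    by rewrite /w sipBr sipZr rmorphM rmorph_nat mulrAC.
  rewrite -(cabsJ c) -(cabs_natr R 2) -!cabsM.
  by have := ler_cabsD (2 * f x e * c^* - f x y) (f x y); rewrite subrK.
have w_perp : `|2 * cabs c * nf (perp x e) - nf (perp x y)| <= nf (perp x w).
  have yw : y + w = (2 * c) *: e by rewrite addrC subrK.
  have := ler_dist_hnormD (perp x y) (perp x w).
  by rewrite -perpD yw perpZ hnormZ cabsM cabs_natr.
have w_dist := hnorm_perp_sqr w x0.
rewrite w_norm (sipC x w) cabsJ in w_dist.
have w_cs := cauchy_schwarz x w; rewrite w_norm in w_cs.
set s := cabs (f x w) in w_sum w_dist w_cs.
set t := 2 * cabs c * nf (perp x e) - nf (perp x y) in w_perp.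
have t_sqr : t ^+ 2 <= nf (perp x w) ^+ 2.
  by rewrite -real_normK ?num_real // ler_sqr ?nnegrE ?normr_ge0 ?hnorm_ge0.
have s_ge0 : 0 <= s := cabs_ge0 _.
have key : nf x * t ^+ 2 <= 2 * nf y * (nf x * nf y - s).
  rewrite -(ler_pM2l X0); nra.
have -> : cabs c * nf (perp x e) - 2^-1 * nf (perp x y) = t / 2.
  by rewrite /t; field.
have -> : nf x / nf y * (t / 2) ^+ 2 = nf x * t ^+ 2 / (4 * nf y).
  by field; rewrite gt_eqF.
have : nf x * t ^+ 2 / (4 * nf y) <= (nf x * nf y - s) / 2.
  by rewrite ler_pdivrMr ?mulr_gt0 //; lra.
lra.
Qed.

End SemiInnerProduct.

Lemma sesquilinear_hermitian (R : realType) (H : lmodType R[i])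
    (B : H -> H -> R[i]) :
  (forall a u v w, B (a *: u + v) w = a * B u w + B v w) ->
  (forall a u v w, B w (a *: u + v) = a^* * B w u + B w v) ->
  (forall u, (B u u)^* = B u u) ->
  forall x y, B y x = (B x y)^*.
Proof.
move=> BLl BLr Breal x y.
have BDl := sipDl BLl; have BZl := sipZl BLl.
have BDr w u v : B w (u + v) = B w u + B w v.
  by have := BLr 1 u v w; rewrite scale1r rmorph1 mul1r.
have B0r w : B w 0 = 0 by apply: (addrI (B w 0)); rewrite -BDr !addr0.
have BZr w a u : B w (a *: u) = a^* * B w u.
  by have := BLr a u 0 w; rewrite !addr0 B0r addr0.
(* polarization along [x + y] and [x + i y] *)
have e1 : (B x y)^* + (B y x)^* = B x y + B y x.
  have := Breal (x + y); rewrite !BDl !BDr !rmorphD /= !Breal.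
  move/eqP; rewrite -subr_eq0 => /eqP h.
  by apply/eqP; rewrite -subr_eq0 -h; apply/eqP; ring.
have e2 : (B x y)^* - (B y x)^* = B y x - B x y.
  have := Breal (x + 'i *: y).
  rewrite !BDl !BDr !BZl !BZr !rmorphD !rmorphM /= !Breal conjCK conjCi.
  move/eqP; rewrite -subr_eq0 => /eqP h; apply/eqP; rewrite -subr_eq0; apply/eqP.
  by apply: (mulfI (neq0Ci _)); rewrite mulr0 -h; ring.
have : 2 * (B y x - (B x y)^*) =
  (B x y + B y x - ((B x y)^* + (B y x)^*))
  - ((B x y)^* - (B y x)^* - (B y x - B x y)) by ring.
rewrite e1 e2 !subrr => /eqP.
by rewrite mulf_eq0 pnatr_eq0 /= subr_eq0 => /eqP.
Qed.

Lemma bernoulli_ineq (R : realFieldType) (r : R) n :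
  1 <= r -> 1 + n%:R * (r - 1) <= r ^+ n.
Proof.
move=> r1; elim: n => [|n IH]; first by rewrite mul0r addr0 expr0.
have := mulr_ge0 (ler0n R n) (sqr_ge0 (r - 1)).
have := ler_wpM2l (le_trans ler01 r1) IH; rewrite expr2 => ? ?.
rewrite -natr1 exprS; lra.
Qed.

Lemma exprn_unbounded (R : archiRealFieldType) (r C : R) :
  1 < r -> exists n, C < r ^+ n.
Proof.
move=> r1; have r10 : 0 < r - 1 by rewrite subr_gt0.
have C0 : 0 <= `|C| / (r - 1) by rewrite divr_ge0 ?normr_ge0 ?ltW.
exists (Num.Def.archi_bound (`|C| / (r - 1))).
have := archi_boundP C0; rewrite ltr_pdivrMr //.
have := bernoulli_ineq (Num.Def.archi_bound (`|C| / (r - 1))) (ltW r1).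
have := ler_norm C; lra.
Qed.

(* Log-convexity forces geometric growth at rate [b 1 / b 0], which the
   bound [C M^k] then caps at [M]. *)
Lemma log_convex_ratio_le (R : archiRealFieldType) (b : nat -> R) (C M : R) :
  0 < M -> (forall k, 0 <= b k) -> (forall k, b k.+1 ^+ 2 <= b k * b k.+2) ->
  (forall k, b k <= C * M ^+ k) -> b 1 <= M * b 0.
Proof.
move=> M0 b_ge0 b_cvx b_le; rewrite leNgt; apply/negP => b1_gt.
have b00 : 0 < b 0.
  rewrite lt_def b_ge0 andbT; apply/eqP => b0.
  have := b_cvx 0; rewrite b0 mul0r; have := b_ge0 1.
  move: b1_gt; rewrite b0 mulr0; nra.
pose q := b 1 / b 0.
have Mq : M < q by rewrite ltr_pdivlMr.
have grow k : q * b k <= b k.+1 /\ 0 < b k.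
  elim: k => [|k [IHle IHgt]]; first by rewrite divfK ?gt_eqF.
  have bk1 : 0 < b k.+1 by nra.
  split=> //; rewrite -(ler_pM2l IHgt).
  by apply: le_trans (b_cvx k); nra.
have low k : q ^+ k * b 0 <= b k.
  elim: k => [|k IH]; first by rewrite expr0 mul1r.
  rewrite exprSr -mulrA mulrCA; apply: le_trans (proj1 (grow k)).
  by rewrite ler_wpM2l // ltW // (lt_trans M0).
have qM1 : 1 < q / M by rewrite ltr_pdivlMr // mul1r.
have [n] := exprn_unbounded (C / b 0) qM1; apply/negP; rewrite -leNgt.
rewrite expr_div_n ler_pdivrMr ?exprn_gt0 // mulrAC ler_pdivlMr //.
exact: le_trans (low n) (b_le n).
Qed.

Section SupImage.
Variables (R : realType) (T : Type) (D : set T) (g : T -> R).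

Lemma le_sup_image K z :
  (forall z, D z -> g z <= K) -> D z -> g z <= sup [set g z | z in D].
Proof.
by move=> gK Dz; apply: ub_le_sup; [exists K => _ [w Dw <-]; apply: gK|exists z].
Qed.

Lemma ge_inf_image K z :
  (forall z, D z -> K <= g z) -> D z -> inf [set g z | z in D] <= g z.
Proof.
by move=> gK Dz; apply: ge_inf; [exists K => _ [w Dw <-]; apply: gK|exists z].
Qed.

Lemma sup_image_sqr_le B : 0 <= B -> (forall z, D z -> 0 <= g z) ->
  (forall z, D z -> g z ^+ 2 <= B) -> sup [set g z | z in D] ^+ 2 <= B.
Proof.
move=> B0 g0 gB; have [[z0 Dz0]|D0] := pselect (D !=set0); last first.
  have -> : [set g z | z in D] = set0.
    by apply/seteqP; split=> // x [z Dz]; exfalso; apply: D0; exists z.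
  by rewrite sup0 expr0n.
have g_sqrt z : D z -> g z <= Num.sqrt B.
  by move=> Dz; rewrite -ler_sqr ?nnegrE ?sqrtr_ge0 ?g0 // sqr_sqrtr ?gB.
have sup_ge0 : 0 <= sup [set g z | z in D].
  exact: le_trans (g0 _ Dz0) (le_sup_image g_sqrt Dz0).
rewrite -(sqr_sqrtr B0) ler_sqr ?nnegrE ?sqrtr_ge0 //.
by apply: ge_sup => [|_ [z Dz <-]]; [exists (g z0), z0|exact: g_sqrt].
Qed.

End SupImage.

Section ASeminorm.
Variables (R : realType) (H : lmodType R[i]) (ip : H -> H -> R[i]) (A : H -> H).
Hypotheses (hip : is_inner_product ip) (hA : bounded_op ip A).
Hypothesis hApos : positive_op ip A.
Local Notation iA := (ipA ip A).
Local Notation nA := (normA ip A).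

Lemma bounded_op_pos T : bounded_op ip T ->
  exists2 M, 0 < M & forall x, hnorm ip (T x) <= M * hnorm ip x.
Proof.
case=> _ [M TM]; exists (`|M| + 1) => [|x]; first by rewrite ltr_pwDr.
apply: le_trans (TM x) _; rewrite ler_wpM2r ?hnorm_ge0 //.
by rewrite (le_trans (ler_norm M)) // lerDl.
Qed.

Lemma ipL a x y z : ip (a *: x + y) z = a * ip x z + ip y z.
Proof. by case: hip. Qed.

Lemma ipC x y : ip y x = (ip x y)^*.
Proof. by case: hip. Qed.

Lemma ipP x : 0 <= ip x x.
Proof. by case: hip. Qed.

Lemma ipAL a x y z : iA (a *: x + y) z = a * iA x z + iA y z.
Proof. by case: hA => AL _; rewrite /ipA AL ipL. Qed.

Lemma ipAC x y : iA y x = (iA x y)^*.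
Proof.
apply: sesquilinear_hermitian => [a u v w|a u v w|u]; first exact: ipAL.
  by rewrite /ipA (sipDr ipL ipC) (sipZr ipL ipC).
exact: geC0_conj (hApos u).
Qed.

Lemma A_selfadjoint x y : ip (A x) y = ip x (A y).
Proof. by rewrite (ipC (A y) x) -/(iA y x) ipAC conjCK. Qed.

Lemma normA_ge0 x : 0 <= nA x.
Proof. exact: sqrtr_ge0. Qed.

Lemma ipA_diag x : iA x x = (nA x ^+ 2)%:C.
Proof. exact: (sip_diag hApos). Qed.

Lemma Re_ipA_diag x : complex.Re (iA x x) = nA x ^+ 2.
Proof. exact: (Re_sip_diag hApos). Qed.

Lemma cauchy_schwarzA x y : cabs (iA x y) <= nA x * nA y.
Proof. exact: (cauchy_schwarz ipAL ipAC hApos). Qed.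

Lemma normAD_le x y : nA (x + y) <= nA x + nA y.
Proof. exact: (hnormD_le ipAL ipAC hApos). Qed.

Lemma normA_le_hnorm : exists2 c, 0 <= c & forall x, nA x <= c * hnorm ip x.
Proof.
have [M M0 AM] := bounded_op_pos hA.
exists (Num.sqrt M) => [|x]; first exact: sqrtr_ge0.
rewrite -ler_sqr ?nnegrE ?normA_ge0 ?mulr_ge0 ?sqrtr_ge0 ?hnorm_ge0 //.
rewrite exprMn (sqr_sqrtr (ltW M0)) -Re_ipA_diag.
apply: le_trans (ler_Re_cabs _) _.
apply: le_trans (cauchy_schwarz ipL ipC ipP _ _) _.
by rewrite expr2 mulrA ler_wpM2r ?hnorm_ge0.
Qed.

Lemma deltaA_ge0 a b c : 0 <= deltaA ip A a b c.
Proof.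
rewrite /deltaA; case: ifP => // _.
by rewrite mulr_ge0 ?divr_ge0 ?normA_ge0 ?sqr_ge0.
Qed.

Lemma buzano_deltaA x y e : nA e = 1 ->
  2 * cabs (iA x e) * cabs (iA y e) + 2 * deltaA ip A y x e
  <= cabs (iA x y) + nA x * nA y.
Proof.
move=> e1; rewrite /deltaA; case: ifPn => [|/negPn].
  rewrite mulf_eq0 negb_or => /andP[y0 x0].
  rewrite !(inf_dist_perp ipAL ipAC hApos) //.
  exact: (buzano_perp ipAL ipAC hApos).
have xe := cauchy_schwarzA x e; have ye := cauchy_schwarzA y e.
have := cabs_ge0 (iA x e); have := cabs_ge0 (iA y e).
have := cabs_ge0 (iA x y); have := normA_ge0 x; have := normA_ge0 y.
rewrite e1 mulr1 in xe ye; rewrite mulf_eq0 mulr0 addr0.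
by move=> ? ? ? ? ? /orP[]/eqP n0; rewrite n0 in xe ye *; nra.
Qed.

Definition A_bounded T := exists2 K, 0 <= K & forall v, nA (T v) <= K * nA v.

Lemma A_boundedD T U :
  A_bounded T -> A_bounded U -> A_bounded (fun v => T v + U v).
Proof.
move=> [K K0 TK] [L L0 UL]; exists (K + L) => [|v]; first exact: addr_ge0.
by rewrite mulrDl (le_trans (normAD_le _ _)) // lerD.
Qed.

Lemma A_bounded_comp T U :
  A_bounded T -> A_bounded U -> A_bounded (fun v => T (U v)).
Proof.
move=> [K K0 TK] [L L0 UL]; exists (K * L) => [|v]; first exact: mulr_ge0.
by rewrite -mulrA (le_trans (TK _)) // ler_wpM2l.
Qed.

Lemma A_bounded_adjoint T U : (forall v w, iA (U v) w = iA v (T w)) ->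
  A_bounded T -> A_bounded U.
Proof.
move=> UT [K K0 TK]; exists K => // v.
have U_sqr : nA (U v) ^+ 2 <= nA v * (K * nA (U v)).
  rewrite -Re_ipA_diag UT; apply: le_trans (ler_Re_cabs _) _.
  by apply: le_trans (cauchy_schwarzA _ _) _; rewrite ler_wpM2l ?normA_ge0.
have [U0|U0] := eqVneq (nA (U v)) 0; first by rewrite U0 mulr_ge0 ?normA_ge0.
have U0' : 0 < nA (U v) by rewrite lt_def U0 normA_ge0.
by rewrite -(ler_pM2r U0') -expr2; lra.
Qed.

Lemma A_bounded_symmetric W : (forall v w, iA (W v) w = iA v (W w)) ->
  (exists2 M, 0 < M & forall x, hnorm ip (W x) <= M * hnorm ip x) ->
  A_bounded W.
Proof.
move=> Wsym [M M0 WM]; have [c c0 Ac] := normA_le_hnorm.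
exists M => [|v]; first exact: ltW.
apply: (@log_convex_ratio_le _ (fun k => nA (iter k W v)) (c * hnorm ip v)) => //.
- by move=> k; exact: normA_ge0.
- move=> k; rewrite -Re_ipA_diag [iter k.+1 W v]iterS Wsym.
  exact: le_trans (ler_Re_cabs _) (cauchy_schwarzA _ _).
- move=> k; apply: le_trans (Ac _) _; rewrite -mulrA ler_wpM2l // mulrC.
  elim: k => [|k IH]; first by rewrite expr0 mul1r.
  rewrite iterS exprS -mulrA; apply: le_trans (WM _) _.
  by apply: ler_wpM2l => //; exact: ltW.
Qed.

Lemma le_omegaA T z : A_bounded T -> nA z = 1 ->
  cabs (iA (T z) z) <= omegaA ip A T.
Proof.
move=> [K K0 TK] z1; apply: (le_sup_image (D := unitA ip A) (K := K)) z1 => w w1.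
by apply: le_trans (cauchy_schwarzA _ _) _; rewrite w1 mulr1 -[K]mulr1 -w1.
Qed.

Lemma le_opnormA T z : A_bounded T -> nA z = 1 -> nA (T z) <= opnormA ip A T.
Proof.
move=> [K K0 TK] z1; apply: (le_sup_image (D := unitA ip A) (K := K)) z1 => w w1.
by rewrite -[K]mulr1 -w1.
Qed.

Section ASharp.
Variables (S Sstar Ssharp : H -> H).
Hypotheses (hS : bounded_op ip S) (hSstar : is_adjoint ip S Sstar).
Hypotheses (hSBA : in_BA ip A Sstar) (hSsharp : is_A_adjoint ip A Sstar Ssharp).

Lemma ipA_sharpr v w : iA (S v) w = iA v (Ssharp w).
Proof.
rewrite /ipA A_selfadjoint hSstar.
by have [<- _] := hSsharp w; rewrite A_selfadjoint.
Qed.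

Lemma ipA_sharpl v w : iA (Ssharp v) w = iA v (S w).
Proof. by rewrite ipAC -ipA_sharpr -ipAC. Qed.

Lemma A_bounded_S : A_bounded S.
Proof.
have [Rop [Rop_bd RopA]] := hSBA.
have ipA_Rop v w : iA v (Rop w) = iA (S v) w.
  by rewrite /ipA A_selfadjoint RopA -hSstar -A_selfadjoint.
have RS_sym v w : iA (Rop (S v)) w = iA v (Rop (S w)).
  by rewrite ipAC ipA_Rop -ipAC ipA_Rop.
have [MR MR0 RopM] := bounded_op_pos Rop_bd.
have [MS MS0 SM] := bounded_op_pos hS.
have [K K0 RSK] : A_bounded (fun v => Rop (S v)).
  apply: A_bounded_symmetric RS_sym _.
  exists (MR * MS) => [|x]; first exact: mulr_gt0.
  apply: le_trans (RopM _) _; rewrite -mulrA.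
  by apply: ler_wpM2l; [exact: ltW|exact: SM].
exists (Num.sqrt K) => [|v]; first exact: sqrtr_ge0.
rewrite -ler_sqr ?nnegrE ?normA_ge0 ?mulr_ge0 ?sqrtr_ge0 //.
rewrite exprMn (sqr_sqrtr K0) -Re_ipA_diag -ipA_Rop.
apply: le_trans (ler_Re_cabs _) _; apply: le_trans (cauchy_schwarzA _ _) _.
by rewrite mulrC expr2 mulrA ler_wpM2r ?normA_ge0.
Qed.

Lemma A_bounded_sharp : A_bounded Ssharp.
Proof. exact: (A_bounded_adjoint ipA_sharpl A_bounded_S). Qed.

Lemma theorem2p6_pointwise z : nA z = 1 ->
  cabs (iA (S z) z) ^+ 2 + nA (S z) ^+ 4 <=
  cabs (iA (Ssharp (S z) + S z) z) ^+ 2 + cabs (iA (Ssharp (S (S z))) z)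
  + 2^-1 * nA (Ssharp (S (Ssharp (S z))) + Ssharp (S z))
  - 2 * deltaA ip A (Ssharp (S z)) (S z) z.
Proof.
move=> z1; set x := S z; set y := Ssharp x.
have iAD := sipDl ipAL.
have yz : iA y z = (nA x ^+ 2)%:C by rewrite ipA_sharpl ipA_diag.
have e1 : iA (y + x) z = (nA x ^+ 2)%:C + iA x z by rewrite iAD yz.
have e2 : iA (Ssharp (S x)) z = iA x y by rewrite ipA_sharpl -ipA_sharpr.
have e3 : iA (Ssharp (S y) + y) z = (nA y ^+ 2 + nA x ^+ 2)%:C.
  by rewrite iAD yz ipA_sharpl ipA_sharpr ipA_diag rmorphD.
have buz := buzano_deltaA x y z1.
rewrite yz cabs_real ger0_norm ?sqr_ge0 // in buz.
have N := cauchy_schwarzA (Ssharp (S y) + y) z.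
rewrite z1 mulr1 e3 cabs_real ger0_norm ?addr_ge0 ?sqr_ge0 // in N.
rewrite e1 e2 sqr_cabs_realD.
have cRe : 0 <= complex.Re (iA x z) + cabs (iA x z).
  have := ler_normRe_cabs (iA x z).
  by rewrite -normrN => /(le_trans (ler_norm _)); lra.
have := mulr_ge0 (sqr_ge0 (nA x)) cRe.
have := sqr_ge0 (nA x - nA y).
have -> : nA x ^+ 4 = (nA x ^+ 2) ^+ 2 by rewrite -exprM.
lra.
Qed.

Lemma theorem2p6_unit z : nA z = 1 ->
  cabs (iA (S z) z) ^+ 2 + nA (S z) ^+ 4 <=
    omegaA ip A (fun z => Ssharp (S z) + S z) ^+ 2
    + omegaA ip A (fun z => Ssharp (S (S z)))
    + 2^-1 * opnormA ip A
        (fun z => Ssharp (S (Ssharp (S z))) + Ssharp (S z))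
    - 2 * inf [set deltaA ip A (Ssharp (S z)) (S z) z | z in unitA ip A].
Proof.
move=> z1; apply: le_trans (theorem2p6_pointwise z1) _.
have bS := A_bounded_S; have bSh := A_bounded_sharp.
have SS := A_bounded_comp bSh bS.
have := le_omegaA (A_boundedD SS bS) z1.
have := le_omegaA (A_bounded_comp bSh (A_bounded_comp bS bS)) z1.
have := le_opnormA (A_boundedD (A_bounded_comp SS SS) SS) z1.
have := ge_inf_image (D := unitA ip A) (K := 0)
  (g := fun z => deltaA ip A (Ssharp (S z)) (S z) z)
  (fun w _ => deltaA_ge0 _ _ _) z1.
have := cabs_ge0 (iA (Ssharp (S z) + S z) z); nra.
Qed.

End ASharp.

End ASeminorm.

Theorem theorem2p6 (R : realType) (H : lmodType R[i]) (ip : H -> H -> R[i])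
  (hH : is_hilbert ip) (A S Sstar Ssharp : H -> H)
  (hA : bounded_op ip A) (hApos : positive_op ip A)
  (hS : bounded_op ip S) (hSstar : is_adjoint ip S Sstar)
  (hSBA : in_BA ip A Sstar) (hSsharp : is_A_adjoint ip A Sstar Ssharp) :
  domegaA ip A S ^+ 2 <=
    omegaA ip A (fun z => Ssharp (S z) + S z) ^+ 2
    + omegaA ip A (fun z => Ssharp (S (S z)))
    + 2^-1 * opnormA ip A
        (fun z => Ssharp (S (Ssharp (S z))) + Ssharp (S z))
    - 2 * inf [set deltaA ip A (Ssharp (S z)) (S z) z | z in unitA ip A].
Proof.
have [hip _] := hH.
have unit_le := theorem2p6_unit hip hA hApos hS hSstar hSBA hSsharp.
rewrite /domegaA; apply: sup_image_sqr_le => [|z _|z z1].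
- have [[z0 z01]|U0] := pselect (unitA ip A !=set0).
    apply: le_trans (unit_le z0 z01).
    by rewrite addr_ge0 ?sqr_ge0 // exprn_ge0 ?normA_ge0.
  have U : unitA ip A = set0.
    by apply/seteqP; split=> // z z1; apply: U0; exists z.
  rewrite /omegaA /opnormA U !image_set0 sup0 inf0; lra.
- exact: sqrtr_ge0.
- by rewrite sqr_sqrtr ?unit_le // addr_ge0 ?sqr_ge0 // exprn_ge0 ?normA_ge0.
Qed.
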